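(* Let $n\ge 2$ and $0\le r\le n-1$ be integers and let $B_r=X^{(\le r)}\cup\{B\in X^{(r+1)}\cup X^{(r+2)}: \{1,2\}\subseteq B\}\subseteq Q_n$. Then $|B_r|=g_r=\sum_{j=0}^{r}\binom{n}{j}+\binom{n-1}{r}$, and $B_r$ is extremal, i.e. $N^t(B_r)$ and $N^t(B_r^c)$ are minimal for every integer $t>0$.
   Context: $X=[n]=\{1,\dots,n\}$, $X^{(j)}=\{B\subseteq X:|B|=j\}$, $X^{(\le j)}=\bigcup_{i\le j}X^{(i)}$. $Q_n$ is the hypercube with vertex set the power set of $[n]$ and metric $d(x,y)=|x\Delta y|$. For $A\subseteq Q_n$ and $t>0$, $N^t(A)=\{x\in Q_n:\min_{y\in A}d(x,y)\le t\}$; $N^t(A)$ is minimal if $|N^t(A)|\le |N^t(B)|$ for all $B\subseteq Q_n$ with $|B|=|A|$. $A$ is extremal if $N^t(A)$ and $N^t(Q_n\setminus A)$ are minimal for all $t>0$. *)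

(* X = [n] is modelled by 'I_n, with the paper's element k
   corresponding to the ordinal of value k-1; Q_n is {set 'I_n}. *)
From mathcomp Require Import all_boot.
Set Implicit Arguments. Unset Strict Implicit. Unset Printing Implicit Defensive.

Definition hdist (n : nat) (x y : {set 'I_n}) : nat :=
  #|(x :\: y) :|: (y :\: x)|.

Definition nbhd (n t : nat) (A : {set {set 'I_n}}) : {set {set 'I_n}} :=
  [set x | [exists y in A, hdist x y <= t]].

Definition minimal_nbhd (n t : nat) (A : {set {set 'I_n}}) : Prop :=
  forall B : {set {set 'I_n}}, #|B| = #|A| -> #|nbhd t A| <= #|nbhd t B|.

Definition extremal (n : nat) (A : {set {set 'I_n}}) : Prop :=
  forall t : nat, 0 < t -> minimal_nbhd t A /\ minimal_nbhd t (~: A).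

(* B_r = X^(<= r) ∪ { B ∈ X^(r+1) ∪ X^(r+2) : {1,2} ⊆ B };
   {1,2} is the set of ordinals of value 0 and 1. *)
Definition Bset (n r : nat) : {set {set 'I_n}} :=
  [set B : {set 'I_n} | (#|B| <= r)
     || (((#|B| == r.+1) || (#|B| == r.+2))
         && ([set i : 'I_n | val i < 2] \subset B))].

Definition gval (n r : nat) : nat :=
  \sum_(j < r.+1) 'C(n, j) + 'C(n.-1, r).

(* Write g_m := 2 * sum_(j <= m) C(n-1, j) for the size of a Hamming ball of
   radius m around an edge of Q_n; this is |B_m|.  The heart of the proof is the
   vertex-isoperimetric inequality  |B| >= g_m  ==>  |N^1(B)| >= g_(m+1).
   Deleting a coordinate i and shifting a coordinate j to i < j are compressions:
   they do not increase |N^1(B)| and strictly decrease the weight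
   sum_(x in B) sum_(k in x) (k + 1), so a weight-minimal family among those no
   worse than B is down-closed and shifted.  For such a family A in Q_(k+1), split
   along the last coordinate e into A0 = {x in A | e not in x} and
   A1 = {x | x + e in A}: shiftedness gives N^1(A1) <= A0 inside Q_k, which
   forces |A0| >= g_m (in Q_k) as soon as |A| >= g_m (in Q_(k+1)), while N^1(A)
   contains both N^1(A0) and A0 + e.
   Induction on k and Pascal's rule give the inequality, and iterating it gives
   |N^t(B)| >= g_(m+t).  Finally N^t(B_r) <= B_(r+t) and N^t(B_r^c) <= B_(r-t)^c,
   and |B_r^c| = g_(n-2-r) by the symmetry of binomial coefficients, so both
   neighbourhoods attain the bound. *)

From mathcomp Require Import all_boot perm zify.
Set Implicit Arguments. Unset Strict Implicit. Unset Printing Implicit Defensive.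

Section HammingDistance.
Variable n : nat.
Implicit Types (x y z : {set 'I_n}) (A : {set {set 'I_n}}).

Lemma in_symdiff x y k : (k \in (x :\: y) :|: (y :\: x)) = (k \in x) (+) (k \in y).
Proof. by rewrite !inE; case: (k \in x); case: (k \in y). Qed.

Lemma hdistC x y : hdist x y = hdist y x.
Proof. by rewrite /hdist setUC. Qed.

Lemma hdistxx x : hdist x x = 0.
Proof. by rewrite /hdist setDv setU0 cards0. Qed.

Lemma hdist_triangle x y z : hdist x z <= hdist x y + hdist y z.
Proof.
rewrite /hdist; apply: leq_trans (leq_card_setU _ _).
apply: subset_leq_card; apply/subsetP=> k; rewrite !inE.
by case: (k \in x); case: (k \in y); case: (k \in z).
Qed.

Lemma hdistE x y : hdist x y = #|x :\: y| + #|y :\: x|.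
Proof.
rewrite /hdist -cardsUI (_ : _ :&: _ = set0) ?cards0 ?addn0 //.
by apply/setP=> k; rewrite !inE; case: (k \in x); case: (k \in y).
Qed.

Lemma hdist_setU1 (i : 'I_n) x : hdist (i |: x) x <= 1.
Proof.
rewrite /hdist -(cards1 i); apply: subset_leq_card; apply/subsetP=> k.
by rewrite !inE; case: (k == i); case: (k \in x).
Qed.

Lemma hdist_leq1 x y : hdist x y <= 1 ->
  x \subset y \/ exists2 i, (i \in x) && (i \notin y) & x :\ i \subset y.
Proof.
move=> dxy; have [|/subsetPn [i ix iNy]] := boolP (x \subset y); [by left | right].
exists i; first by rewrite ix iNy.
apply/subsetP=> k; rewrite !inE => /andP[ki kx]; apply/negPn/negP => kNy.
have : [set i; k] \subset (x :\: y) :|: (y :\: x).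
  by apply/subsetP=> z; rewrite !inE => /orP[] /eqP->; rewrite ?ix ?iNy ?kx ?kNy.
move/subset_leq_card; rewrite cards2 eq_sym ki.
by move/leq_trans/(_ dxy).
Qed.

Lemma mem_nbhd t A x y : y \in A -> hdist x y <= t -> x \in nbhd t A.
Proof. by move=> yA dxy; rewrite inE; apply/existsP; exists y; rewrite yA. Qed.

Lemma subset_nbhd t A : A \subset nbhd t A.
Proof. by apply/subsetP=> x xA; apply: (mem_nbhd xA); rewrite hdistxx. Qed.

Lemma nbhd1_nbhd t A : nbhd 1 (nbhd t A) \subset nbhd t.+1 A.
Proof.
apply/subsetP=> x; rewrite inE => /existsP[y /andP[]]; rewrite inE.
move=> /existsP[z /andP[zA dyz]] dxy; apply: (mem_nbhd zA).
by apply: leq_trans (hdist_triangle x y z) _; rewrite -addn1 addnC leq_add.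
Qed.

Lemma nbhd_set0 t : nbhd t (set0 : {set {set 'I_n}}) = set0.
Proof. by apply/setP=> x; rewrite !inE; apply/existsP=> [[y]]; rewrite inE. Qed.

End HammingDistance.

Section Compression.
Variables (n : nat) (s : {set 'I_n} -> {set 'I_n}) (P : pred {set 'I_n}).
Variable wt : {set 'I_n} -> nat.
Hypothesis sK : involutive s.
Hypothesis hdist_s : forall x y, hdist (s x) (s y) = hdist x y.
Hypothesis s_bad : forall x, ~~ P x -> P (s x).
Hypothesis s_good_bad : forall x, P x -> s x != x -> ~~ P (s x).
Hypothesis hdist_good : forall x y, P x -> P y -> hdist x y <= hdist x (s y).
Hypothesis wt_s_bad : forall x, ~~ P x -> wt (s x) < wt x.
Implicit Types (x y : {set 'I_n}) (A : {set {set 'I_n}}).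

(* Points [x] with [~~ P x] are moved to [s x] whenever that place is vacant. *)
Definition compress A :=
  [set x | (x \in A) && (s x \in A) || P x && ((x \in A) || (s x \in A))].

Definition compress_move A x := if ~~ P x && (s x \notin A) then s x else x.

Lemma compress_move_inj A : {in A &, injective (compress_move A)}.
Proof.
move=> x y xA yA; rewrite /compress_move.
case: ifP => [/andP[_ sxNA]|_]; case: ifP => [/andP[_ syNA]|_] //.
- exact: (can_inj sK).
- by move=> sxy; rewrite sxy yA in sxNA.
- by move=> xsy; rewrite -xsy xA in syNA.
Qed.

Lemma compressE A : compress A = compress_move A @: A.
Proof.
apply/setP=> x; apply/idP/imsetP.
  rewrite inE => xC; case xA: (x \in A).
    exists x => //; rewrite /compress_move; case: ifP => // /andP[Px sxNA].
    by rewrite xA (negPf Px) (negPf sxNA) in xC.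
  rewrite xA /= in xC; case/andP: xC => Px sxA; exists (s x) => //.
  have sxx : s x != x by apply: contraTneq sxA => ->; rewrite xA.
  by rewrite /compress_move (s_good_bad Px sxx) sK xA.
move=> [y yA ->]; rewrite /compress_move; case: ifP => [/andP[Py _]|].
  by rewrite inE sK yA (s_bad Py) !orbT.
by rewrite inE yA; case: (P y); case: (s y \in A).
Qed.

Lemma card_compress A : #|compress A| = #|A|.
Proof. by rewrite compressE card_in_imset //; apply: compress_move_inj. Qed.

Lemma nbhd_compress t A : nbhd t (compress A) \subset compress (nbhd t A).
Proof.
apply/subsetP=> x; rewrite inE => /existsP[y /andP[]]; rewrite inE => yC dxy.
have dsxy : hdist (s x) (s y) <= t by rewrite hdist_s.
rewrite inE; case Px: (P x) => /=.
  case/orP: yC => [/andP[yA _]|/andP[_ /orP[yA|syA]]];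
    by rewrite ?(mem_nbhd yA dxy) ?(mem_nbhd syA dsxy) ?orbT.
have Psx : P (s x) by rewrite s_bad ?Px.
rewrite orbF; case/orP: yC => [/andP[yA syA]|/andP[Py /orP[yA|syA]]].
- by rewrite (mem_nbhd yA dxy) (mem_nbhd syA dsxy).
- rewrite (mem_nbhd yA dxy); apply: (mem_nbhd yA).
  exact: leq_trans (hdist_good Psx Py) dsxy.
- rewrite (mem_nbhd syA dsxy) andbT; apply: (mem_nbhd syA).
  by rewrite -hdist_s sK; apply: leq_trans (hdist_good Psx Py) dsxy.
Qed.

Lemma card_nbhd_compress t A : #|nbhd t (compress A)| <= #|nbhd t A|.
Proof.
rewrite -[leqRHS](card_compress (nbhd t A)).
exact/subset_leq_card/nbhd_compress.
Qed.

Definition potential A := \sum_(x in A) wt x.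

Lemma potential_compress A x :
  x \in A -> ~~ P x -> s x \notin A -> potential (compress A) < potential A.
Proof.
move=> xA Px sxNA; rewrite /potential compressE big_imset; last exact: compress_move_inj.
rewrite (bigD1 x) //= [ltnRHS](bigD1 x) //= -addSn.
have -> : compress_move A x = s x by rewrite /compress_move Px sxNA.
apply: leq_add (wt_s_bad Px) _; apply: leq_sum => y _; rewrite /compress_move.
by case: ifP => // /andP[Py _]; apply/ltnW/wt_s_bad.
Qed.

Lemma potential_min_stable A :
  (forall C : {set {set 'I_n}},
     #|C| = #|A| -> #|nbhd 1 C| <= #|nbhd 1 A| -> potential A <= potential C) ->
  {in A, forall x, ~~ P x -> s x \in A}.
Proof.
move=> minA x xA Px; apply/negPn/negP => sxNA.
have := potential_compress xA Px sxNA.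
by rewrite ltnNge minA ?card_compress ?card_nbhd_compress.
Qed.

End Compression.

Section DownShiftCompressions.
Variable n : nat.
Implicit Types (x y : {set 'I_n}) (A : {set {set 'I_n}}).

Definition deletion_closed A := forall x (i : 'I_n), x \in A -> i \in x -> x :\ i \in A.

Definition shift_closed A := forall x (i j : 'I_n),
  x \in A -> i < j -> j \in x -> i \notin x -> i |: (x :\ j) \in A.

Lemma deletion_closed_sub A y x : deletion_closed A -> y \in A -> x \subset y -> x \in A.
Proof.
move=> delA; move: {2}#|y| (leqnn #|y|) => m; elim: m y => [|m IH] y cy yA xy.
  move: cy; rewrite leqn0 cards_eq0 => /eqP y0.
  by move: xy; rewrite y0 subset0 => /eqP->; rewrite -y0.
have [-> //|xNy] := eqVneq x y.
have /subsetPn[i iy iNx] : ~~ (y \subset x) by apply: contra xNy => yx; rewrite eqEsubset xy.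
apply: (IH (y :\ i)); first by move: cy; rewrite (cardsD1 i y) iy.
  exact: delA.
by apply/subsetP=> k kx; rewrite !inE (subsetP xy _ kx) andbT; apply: contraNneq iNx => <-.
Qed.

Definition ord_weight x := \sum_(k in x) (val k).+1.

Definition toggle (i : 'I_n) x := (x :\: [set i]) :|: ([set i] :\: x).

Lemma in_toggle i x k : (k \in toggle i x) = (k \in x) (+) (k == i).
Proof. by rewrite !inE; case: (k \in x); case: (k == i). Qed.

Lemma toggleK i : involutive (toggle i).
Proof. by move=> x; apply/setP=> k; rewrite !in_toggle addbK. Qed.

Lemma hdist_toggle i x y : hdist (toggle i x) (toggle i y) = hdist x y.
Proof.
rewrite /hdist; apply: eq_card => k; rewrite !in_symdiff inE.
by case: (k \in x); case: (k \in y); case: (k == i).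
Qed.

Lemma toggle_in i x : i \in x -> toggle i x = x :\ i.
Proof.
move=> ix; apply/setP=> k; rewrite in_toggle !inE.
by case: eqP => [->|_]; rewrite ?ix ?addbF.
Qed.

Lemma hdist_toggle_notin i x y :
  i \notin x -> i \notin y -> hdist x y <= hdist x (toggle i y).
Proof.
move=> iNx iNy; apply/subset_leq_card/subsetP=> k.
rewrite !in_symdiff inE.
by case: eqP => [->|_]; rewrite ?(negPf iNx) ?(negPf iNy) ?addbF.
Qed.

Lemma ord_weight_toggle i x : ~~ (i \notin x) -> ord_weight (toggle i x) < ord_weight x.
Proof.
rewrite negbK => ix; rewrite /ord_weight (bigD1 i ix) /= addSn ltnS.
rewrite (eq_bigl (fun k => (k \in x) && (k != i))) ?leq_addl // => k.
by rewrite in_toggle; case: eqP => [->|]; rewrite ?ix ?andbF ?andbT ?addbF.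
Qed.

Lemma toggle_bad i x : ~~ (i \notin x) -> i \notin toggle i x.
Proof. by rewrite negbK in_toggle => ->; rewrite eqxx. Qed.

Lemma toggle_good_bad i x : i \notin x -> toggle i x != x -> ~~ (i \notin toggle i x).
Proof. by move=> iNx _; rewrite negbK in_toggle (negPf iNx) eqxx. Qed.

Section Swap.
Variables i j : 'I_n.
Hypothesis ltij : i < j.

Definition swap x := tperm i j @^-1: x.

Definition swap_good x := ~~ ((j \in x) && (i \notin x)).

Lemma swapK : involutive swap.
Proof. by move=> x; apply/setP=> k; rewrite !inE tpermK. Qed.

Lemma hdist_swap x y : hdist (swap x) (swap y) = hdist x y.
Proof.
rewrite /hdist -(card_preimset _ (@perm_inj _ (tperm i j))).
by apply: eq_card => k; rewrite /swap !inE !tpermK.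
Qed.

Lemma swap_id x : (i \in x) = (j \in x) -> swap x = x.
Proof.
by move=> ijx; apply/setP=> k; rewrite /swap inE; case: tpermP => [->|->|] //; rewrite ijx.
Qed.

Lemma swapE x : j \in x -> i \notin x -> swap x = i |: (x :\ j).
Proof.
move=> jx iNx; apply/setP=> k; rewrite /swap !inE.
case: tpermP => [->|->|/eqP ki /eqP kj]; rewrite ?eqxx ?(negPf ki) ?kj //.
by rewrite (negPf iNx) orbF; apply/esym/negbTE; rewrite -val_eqE neq_ltn ltij orbT.
Qed.

Lemma swap_bad x : ~~ swap_good x -> swap_good (swap x).
Proof. by rewrite /swap_good negbK => /andP[jx iNx]; rewrite !inE tpermR (negPf iNx). Qed.

Lemma swap_good_moved x : swap_good x -> swap x != x -> (i \in x) && (j \notin x).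
Proof.
rewrite /swap_good => + sxx; case ix: (i \in x); case jx: (j \in x) => //=.
all: by move: sxx; rewrite swap_id ?eqxx ?ix ?jx.
Qed.

Lemma swap_good_bad x : swap_good x -> swap x != x -> ~~ swap_good (swap x).
Proof.
move=> gx sxx; case/andP: (swap_good_moved gx sxx) => ix jNx.
by rewrite /swap_good negbK !inE tpermR tpermL ix.
Qed.

Lemma hdist_swap_good x y :
  swap_good x -> swap_good y -> hdist x y <= hdist x (swap y).
Proof.
move=> gx gy; have [-> //|syy] := eqVneq (swap y) y.
have [sxx|sxx] := eqVneq (swap x) x; first by rewrite -{2}sxx hdist_swap.
case/andP: (swap_good_moved gx sxx) => ix jNx.
case/andP: (swap_good_moved gy syy) => iy jNy.
apply/subset_leq_card/subsetP=> k; rewrite !in_symdiff inE.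
by case: tpermP => [->|->|_ _]; rewrite ?ix ?iy ?(negPf jNx) ?(negPf jNy).
Qed.

Lemma ord_weight_swap x : ~~ swap_good x -> ord_weight (swap x) < ord_weight x.
Proof.
rewrite /swap_good negbK => /andP[jx iNx].
rewrite /ord_weight (reindex_inj (@perm_inj _ (tperm i j))) /=.
rewrite (eq_bigl (fun k => k \in x)); last by move=> k; rewrite inE tpermK.
rewrite (bigD1 j jx) [ltnRHS](bigD1 j jx) /= tpermR.
rewrite (eq_bigr (fun k => (val k).+1)) ?ltn_add2r // => k /andP[kx kj].
by rewrite tpermD // eq_sym //; apply: contraNneq iNx => <-.
Qed.

End Swap.

Lemma exists_compressed (B : {set {set 'I_n}}) : exists A : {set {set 'I_n}},
  [/\ #|A| = #|B|, #|nbhd 1 A| <= #|nbhd 1 B|, deletion_closed A & shift_closed A].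
Proof.
pose ok A := (#|A| == #|B|) && (#|nbhd 1 A| <= #|nbhd 1 B|).
have okB : ok B by rewrite /ok !eqxx leqnn.
have [A /andP[/eqP cardA nbhdA] minA] := arg_minnP (potential ord_weight) okB.
have minA' (C : {set {set 'I_n}}) : #|C| = #|A| -> #|nbhd 1 C| <= #|nbhd 1 A| ->
    potential ord_weight A <= potential ord_weight C.
  by move=> cardC nbhdC; apply: minA; rewrite /ok cardC cardA eqxx (leq_trans nbhdC).
exists A; split=> // [x i xA ix | x i j xA ltij jx iNx].
- rewrite -toggle_in //; apply: (potential_min_stable (toggleK i) (@hdist_toggle i)
    (@toggle_bad i) (@toggle_good_bad i) (@hdist_toggle_notin i) (@ord_weight_toggle i)
    minA') => //.
  by rewrite negbK.
- rewrite -swapE //; apply: (potential_min_stable (swapK i j) (@hdist_swap i j)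
    (@swap_bad i j) (@swap_good_bad i j) (@hdist_swap_good i j)
    (ord_weight_swap ltij) minA') => //.
  by rewrite /swap_good jx iNx.
Qed.

End DownShiftCompressions.

(* [gsum k r] is g_r computed in Q_k; the truncated [k.-1] makes [gsum 0 r = 2]. *)
Definition gsum k r := 2 * \sum_(j < r.+1) 'C(k.-1, j).

Lemma gsum0 k : gsum k 0 = 2.
Proof. by rewrite /gsum big_ord_recl big_ord0 bin0. Qed.

Lemma gsum1 r : gsum 1 r = 2.
Proof. by rewrite /gsum big_ord_recl bin0 big1 // => j _; rewrite bin0n. Qed.

Lemma sum_binS k r : \sum_(j < r.+2) 'C(k.+1, j) =
  \sum_(j < r.+2) 'C(k, j) + \sum_(j < r.+1) 'C(k, j).
Proof.
elim: r => [|r IH]; first by rewrite !big_ord_recr !big_ord0 /= !bin0 !bin1; lia.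
rewrite big_ord_recr IH /= binS [in RHS]big_ord_recr [in X in _ = _ + X]big_ord_recr /=.
lia.
Qed.

Lemma gsumSS k r : 0 < k -> gsum k.+1 r.+1 = gsum k r.+1 + gsum k r.
Proof. by case: k => // k _; rewrite /gsum /= sum_binS mulnDr. Qed.

Section Prefix.
Variable n : nat.
Implicit Types (x y : {set 'I_n}) (A : {set {set 'I_n}}).

Definition prefix k : {set 'I_n} := [set i : 'I_n | i < k].

Definition nbhd1_in k A := nbhd 1 A :&: powerset (prefix k).

Lemma prefix_leq k x i : x \subset prefix k -> i \in x -> i < k.
Proof. by move=> xk ix; have := subsetP xk i ix; rewrite inE. Qed.

Lemma mem_nbhd1_in k A x y :
  x \subset prefix k -> y \in A -> hdist x y <= 1 -> x \in nbhd1_in k A.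
Proof. by move=> xk yA dxy; rewrite inE powersetE xk (mem_nbhd yA dxy). Qed.

Lemma subset_nbhd1_in k A : A \subset powerset (prefix k) -> A \subset nbhd1_in k A.
Proof. by move=> Ak; rewrite subsetI subset_nbhd. Qed.

Lemma prefix_all : prefix n = setT.
Proof. by apply/setP=> i; rewrite !inE ltn_ord. Qed.

Lemma nbhd1_in_all A : nbhd1_in n A = nbhd 1 A.
Proof. by rewrite /nbhd1_in prefix_all powersetT setIT. Qed.

Definition nbhd1_bound k := forall r A,
  A \subset powerset (prefix k) -> deletion_closed A -> shift_closed A ->
  gsum k r <= #|A| -> gsum k r.+1 <= #|nbhd1_in k A|.

Lemma nbhd1_bound1 : nbhd1_bound 1.
Proof.
move=> r A A1 _ _; rewrite !gsum1 => cardA.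
exact: leq_trans cardA (subset_leq_card (subset_nbhd1_in A1)).
Qed.

Section LastCoordinate.
Variables (k : nat) (ltkn : k < n).
Local Notation e := (Ordinal ltkn).

Lemma neq_last (i : 'I_n) : i < k -> (i == e) = false.
Proof. by move=> ltik; apply/negbTE; rewrite -val_eqE /= neq_ltn ltik. Qed.

Lemma prefix_notin_last x : x \subset prefix k -> e \notin x.
Proof. by move=> xk; apply/negP => /(prefix_leq xk); rewrite ltnn. Qed.

Lemma prefixS_notin_last x : x \subset prefix k.+1 -> e \notin x -> x \subset prefix k.
Proof.
move=> xk eNx; apply/subsetP=> i ix; rewrite inE ltn_neqAle -ltnS (prefix_leq xk) //.
by rewrite andbT; apply: contraNneq eNx => ik; rewrite (_ : e = i) //; apply: val_inj.
Qed.

Variable A : {set {set 'I_n}}.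
Hypotheses (Ak : A \subset powerset (prefix k.+1)) (delA : deletion_closed A).
Hypothesis shA : shift_closed A.

Definition lower := [set x : {set 'I_n} in A | e \notin x].
Definition upper := [set x : {set 'I_n} | (e \notin x) && (e |: x \in A)].

Lemma card_lower_upper : #|A| = #|lower| + #|upper|.
Proof.
have upperE : upper = (fun x => x :\ e) @: [set x in A | e \in x].
  apply/setP=> y; apply/idP/imsetP => [|[x]].
    by rewrite inE => /andP[eNy eyA]; exists (e |: y); rewrite ?setU1K // inE eyA setU11.
  by rewrite inE => /andP[xA ex] ->; rewrite inE setD11 setD1K.
rewrite -(cardsID [set x : {set 'I_n} | e \in x] A) addnC; congr (_ + _).
  by apply: eq_card => x; rewrite !inE andbC.
rewrite upperE card_in_imset; first by apply: eq_card => x; rewrite !inE andbC.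
by move=> x y; rewrite !inE => /andP[_ ex] /andP[_ ey] xy; rewrite -(setD1K ex) xy setD1K.
Qed.

Lemma lower_sub : lower \subset powerset (prefix k).
Proof.
apply/subsetP=> x; rewrite inE powersetE => /andP[xA eNx].
by apply: prefixS_notin_last eNx; rewrite -powersetE (subsetP Ak).
Qed.

Lemma upper_sub : upper \subset powerset (prefix k).
Proof.
apply/subsetP=> y; rewrite inE powersetE => /andP[eNy eyA].
apply: prefixS_notin_last eNy; apply: subset_trans (subsetUr [set e] y) _.
by rewrite -powersetE (subsetP Ak).
Qed.

Lemma lower_deletion_closed : deletion_closed lower.
Proof.
by move=> x i; rewrite !inE => /andP[xA eNx] ix; rewrite delA // negb_and eNx orbT.
Qed.

Lemma lower_shift_closed : shift_closed lower.
Proof.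
move=> x i j xl ltij jx iNx; have xk := subsetP lower_sub x xl; rewrite powersetE in xk.
move: xl; rewrite !inE => /andP[xA eNx]; rewrite shA //= !negb_or negb_and eNx orbT.
by rewrite eq_sym neq_last // (ltn_trans ltij) // (prefix_leq xk).
Qed.

Lemma upper_deletion_closed : deletion_closed upper.
Proof.
move=> y i yu iy; have yk := subsetP upper_sub y yu; rewrite powersetE in yk.
move: yu; rewrite !inE => /andP[eNy eyA]; rewrite negb_and eNy orbT /=.
have -> : e |: (y :\ i) = (e |: y) :\ i.
  apply/setP=> z; rewrite !inE; case: (eqVneq z e) => [->|] //=.
  by rewrite eq_sym neq_last // (prefix_leq yk iy).
by rewrite delA // !inE iy orbT.
Qed.

Lemma upper_shift_closed : shift_closed upper.
Proof.
move=> y i j yu ltij jy iNy; have yk := subsetP upper_sub y yu; rewrite powersetE in yk.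
move: yu; rewrite !inE => /andP[eNy eyA].
have ltjk := prefix_leq yk jy; have ltik := ltn_trans ltij ltjk.
have -> : e |: (i |: (y :\ j)) = i |: ((e |: y) :\ j).
  apply/setP=> z; rewrite !inE; case: (eqVneq z e) => [->|] //=.
  by rewrite eq_sym neq_last // eq_sym neq_last.
rewrite negb_or negb_and eNy eq_sym neq_last // orbT /=.
by rewrite shA // !inE ?jy ?orbT // neq_last.
Qed.

(* Going up in the direction [e] and then down in a direction [i] is a shift. *)
Lemma nbhd1_in_upper : nbhd1_in k upper \subset lower.
Proof.
apply/subsetP=> x; rewrite in_setI powersetE inE => /andP[/existsP[y /andP[yu dxy]] xk].
have eNx := prefix_notin_last xk; rewrite inE eNx andbT.
move: yu; rewrite inE => /andP[eNy eyA].
case: (hdist_leq1 dxy) => [xy | [i /andP[ix iNy] xiy]].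
  by apply: (deletion_closed_sub delA eyA); apply: subset_trans xy (subsetUr _ _).
have shifted : i |: ((e |: y) :\ e) \in A.
  by rewrite shA ?setU11 // ?(prefix_leq xk) // !inE negb_or iNy neq_last ?(prefix_leq xk).
apply: (deletion_closed_sub delA shifted); apply/subsetP=> z zx; rewrite !inE.
have [//|zi] := eqVneq z i; have /(subsetP xiy) zy : z \in x :\ i by rewrite !inE zi.
by rewrite zy orbT andbT; apply: contraNneq eNx => <-.
Qed.

Lemma card_nbhd1_in_lower : #|nbhd1_in k lower| + #|lower| <= #|nbhd1_in k.+1 A|.
Proof.
have lk x : x \in lower -> x \subset prefix k by rewrite -powersetE; apply/subsetP/lower_sub.
have prefix_mono x : x \subset prefix k -> x \subset prefix k.+1.
  by move=> xk; apply: subset_trans xk _; apply/subsetP=> i; rewrite !inE => /ltnW.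
have -> : #|lower| = #|(fun x => e |: x) @: lower|.
  rewrite card_in_imset // => x y xl yl exy.
  by rewrite -(setU1K (prefix_notin_last (lk x xl))) exy setU1K ?prefix_notin_last ?lk.
rewrite -cardsUI (_ : _ :&: _ = set0) ?cards0 ?addn0.
  apply/subset_leq_card/subsetP=> x; rewrite inE => /orP[].
    rewrite in_setI powersetE inE => /andP[/existsP[y /andP[yl dxy]] xk].
    by apply: (mem_nbhd1_in (prefix_mono _ xk) _ dxy); move: yl; rewrite inE => /andP[].
  move=> /imsetP[y yl ->]; apply: (mem_nbhd1_in _ _ (hdist_setU1 e y)).
    by rewrite subUset sub1set inE /= ltnSn prefix_mono ?lk.
  by move: yl; rewrite inE => /andP[].
apply/setP=> x; rewrite !inE; apply/negbTE; apply/negP.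
by case/andP=> /andP[_ xk] /imsetP[y _ xe]; move: (prefix_notin_last xk); rewrite xe setU11.
Qed.

Hypotheses (k_gt0 : 0 < k) (IHk : nbhd1_bound k).

Lemma gsum_leq_card_lower r : gsum k.+1 r <= #|A| -> gsum k r <= #|lower|.
Proof.
have upper_lower : #|nbhd1_in k upper| <= #|lower| := subset_leq_card nbhd1_in_upper.
rewrite card_lower_upper; case: r => [|r] cardA.
  rewrite !gsum0 in cardA *; have [upper0 | [y yu]] := set_0Vmem upper.
    by move: cardA; rewrite upper0 cards0 addn0.
  have set0u : set0 \in upper.
    exact: deletion_closed_sub upper_deletion_closed yu (sub0set _).
  pose i0 : 'I_n := Ordinal (ltn_trans k_gt0 ltkn).
  have set0_i0 : set0 != i0 |: set0.
    by apply/eqP=> /setP/(_ i0); rewrite !inE eqxx.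
  apply: leq_trans upper_lower.
  have <- : #|[set set0; i0 |: set0]| = 2 by rewrite cards2 set0_i0.
  apply/subset_leq_card/subsetP=> x /set2P[] ->; apply: (mem_nbhd1_in _ set0u).
  - by rewrite sub0set.
  - by rewrite hdistxx.
  - by rewrite setU0 sub1set inE.
  - exact: hdist_setU1.
have [big | small] := leqP (gsum k r) #|upper|.
  exact: leq_trans (IHk upper_sub upper_deletion_closed upper_shift_closed big) upper_lower.
by move: cardA; rewrite gsumSS //; lia.
Qed.

End LastCoordinate.

Lemma nbhd1_boundS k : 0 < k -> k < n -> nbhd1_bound k -> nbhd1_bound k.+1.
Proof.
move=> k_gt0 ltkn IHk r A Ak delA shA cardA.
have lowerA := gsum_leq_card_lower ltkn Ak delA shA k_gt0 IHk cardA.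
rewrite gsumSS //; apply: leq_trans (card_nbhd1_in_lower ltkn Ak).
apply: leq_add (lowerA).
exact: IHk (lower_sub ltkn Ak) (lower_deletion_closed delA) (lower_shift_closed Ak shA) lowerA.
Qed.

Lemma nbhd1_bound_all k : 0 < k -> k <= n -> nbhd1_bound k.
Proof.
elim: k => // -[_ _ _ | k IHk _ ltkn]; first exact: nbhd1_bound1.
by apply: nbhd1_boundS ltkn (IHk _ (ltnW ltkn)).
Qed.

End Prefix.

Section HarperBound.
Variables (n : nat) (n_gt0 : 0 < n).
Implicit Types B : {set {set 'I_n}}.

Lemma gsum_leq_card_nbhd1 m B : gsum n m <= #|B| -> gsum n m.+1 <= #|nbhd 1 B|.
Proof.
move=> cardB; have [A [cardA nbhdA delA shA]] := exists_compressed B.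
apply: leq_trans nbhdA; rewrite -nbhd1_in_all.
by apply: nbhd1_bound_all; rewrite ?cardA ?prefix_all ?powersetT ?subsetT.
Qed.

Lemma gsum_leq_card_nbhd t m B : gsum n m <= #|B| -> gsum n (m + t) <= #|nbhd t B|.
Proof.
elim: t => [|t IHt] cardB.
  by rewrite addn0; apply: leq_trans cardB (subset_leq_card (subset_nbhd 0 B)).
rewrite addnS; apply: leq_trans (subset_leq_card (nbhd1_nbhd t B)).
exact: gsum_leq_card_nbhd1 (IHt cardB).
Qed.

End HarperBound.

Lemma sum_bin N : \sum_(j < N.+1) 'C(N, j) = 2 ^ N.
Proof.
have := expnDn 1 1 N; rewrite addn1 => ->.
by apply: eq_bigr => i _; rewrite !exp1n !muln1.
Qed.

Lemma sum_bin_leq N m : N <= m -> \sum_(j < m.+1) 'C(N, j) = 2 ^ N.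
Proof.
move/subnKC <-; elim: (m - N) => [|d IH]; first by rewrite addn0 sum_bin.
by rewrite addnS big_ord_recr IH /= bin_small ?addn0 // ltnS leq_addr.
Qed.

Lemma sum_bin_rev N b : b <= N ->
  \sum_(j < b.+1) 'C(N, j) = \sum_(N - b <= j < N.+1) 'C(N, j).
Proof.
elim: b => [|b IH] ltbN.
  by rewrite big_ord_recr big_ord0 subn0 big_nat1 /= add0n bin0 binn.
rewrite big_ord_recr IH ?(ltnW ltbN) //= [in RHS]big_ltn; last by rewrite ltnS leq_subr.
by rewrite subnSK // bin_sub // addnC.
Qed.

Lemma sum_bin_compl N a b : 0 < N -> a + b = N.-1 ->
  \sum_(j < a.+1) 'C(N, j) + \sum_(j < b.+1) 'C(N, j) = 2 ^ N.
Proof.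
move=> N_gt0 abN; rewrite (sum_bin_rev (b := b)); last by lia.
have -> : N - b = a.+1 by lia.
rewrite -(big_mkord (fun _ => true) (fun j => 'C(N, j))) -big_cat_nat; last by lia.
  by rewrite big_mkord sum_bin.
by [].
Qed.

Lemma gsum_compl n a b : 2 <= n -> a + b = n - 2 -> gsum n a + gsum n b = 2 ^ n.
Proof.
move=> n_ge2 abn; rewrite /gsum -mulnDr sum_bin_compl; try lia.
by case: n n_ge2 {abn} => // n _; rewrite expnS.
Qed.

Lemma gsum_full n m : 0 < n -> n.-1 <= m -> gsum n m = 2 ^ n.
Proof. by case: n => // n _ lenm; rewrite /gsum sum_bin_leq // expnS. Qed.

Lemma gval_gsum n m : 0 < n -> gval n m = gsum n m.
Proof.
case: n => // n _; rewrite /gval /gsum /=.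
case: m => [|m]; first by rewrite !big_ord_recr !big_ord0 /= !bin0.
rewrite sum_binS [X in _ = 2 * X]big_ord_recr /=.
set s := \sum_(i < m.+1) _; rewrite [\sum_(j < m.+2) _]big_ord_recr /= -/s.
lia.
Qed.

Lemma card_set_orb (T : finType) (p q : pred T) : (forall x, p x -> ~~ q x) ->
  #|[set x | p x || q x]| = #|[set x | p x]| + #|[set x | q x]|.
Proof.
move=> pNq; rewrite -cardsUI (_ : [set x | p x] :&: _ = set0) ?cards0 ?addn0.
  by apply: eq_card => x; rewrite !inE.
by apply/setP=> x; rewrite !inE; apply/negbTE; apply/negP => /andP[/pNq/negPf->].
Qed.

Section Counting.
Variables (n : nat) (n_ge2 : 2 <= n).

Definition pair01 : {set 'I_n} := [set i : 'I_n | val i < 2].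

Lemma card_pair01 : #|pair01| = 2.
Proof.
have -> : pair01 = [set Ordinal (ltnW n_ge2); Ordinal n_ge2].
  by apply/setP=> -[[|[|i]] ltin]; rewrite !inE.
by rewrite cards2.
Qed.

Lemma card_layer j : #|[set x : {set 'I_n} | #|x| == j]| = 'C(n, j).
Proof. by rewrite card_draws card_ord. Qed.

Lemma card_sets_leq m : #|[set x : {set 'I_n} | #|x| <= m]| = \sum_(j < m.+1) 'C(n, j).
Proof.
elim: m => [|m IH].
  by rewrite big_ord1 -card_layer; apply: eq_card => x; rewrite !inE leqn0.
rewrite big_ord_recr /= -IH -card_layer -card_set_orb.
  by apply: eq_card => x; rewrite !inE leq_eqVlt ltnS orbC.
by move=> x lexm; apply: contraTneq lexm => ->; rewrite ltnn.
Qed.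

Lemma card_sets_over01 k :
  #|[set x : {set 'I_n} | (#|x| == k.+2) && (pair01 \subset x)]| = 'C(n.-2, k).
Proof.
have card_compl01 : #|~: pair01| = n.-2.
  by have := cardsC pair01; rewrite card_pair01 card_ord; lia.
rewrite -card_compl01 -cards_draws.
have -> : [set x : {set 'I_n} | (#|x| == k.+2) && (pair01 \subset x)] =
    (fun y => pair01 :|: y) @: [set y : {set 'I_n} | y \subset ~: pair01 & #|y| == k].
  apply/setP=> x; rewrite inE; apply/andP/imsetP => [[/eqP cardx px]|[y]].
    exists (x :\: pair01).
      rewrite inE subDset setUCr subsetT /= cardsD (setIidPr px) cardx card_pair01.
      by apply/eqP; lia.
    apply/setP=> z; rewrite !inE; case: ltnP => //= z_lt2.
    by rewrite (subsetP px) // inE.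
  rewrite inE => /andP[yc /eqP cardy] ->; split; last exact: subsetUl.
  rewrite cardsU (_ : pair01 :&: y = set0) ?cards0 ?subn0 ?card_pair01 ?cardy //.
  by apply/eqP; rewrite setI_eq0 disjoint_sym disjoints_subset.
have pair01K (y : {set 'I_n}) : y \subset ~: pair01 -> (pair01 :|: y) :\: pair01 = y.
  by move=> yc; rewrite setDUl setDv set0U; apply/setDidPl; rewrite disjoints_subset.
rewrite card_in_imset // => y1 y2; rewrite !inE => /andP[y1c _] /andP[y2c _] y12.
by rewrite -(pair01K y1) // y12 pair01K.
Qed.

Lemma card_Bset m : #|Bset n m| = gval n m.
Proof.
rewrite /Bset -/pair01 card_set_orb; last first.
  by move=> x lexm; apply/negP => /andP[/orP[] /eqP cardx _]; move: lexm; rewrite cardx; lia.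
rewrite /= card_sets_leq /gval; congr (_ + _).
rewrite (eq_card (B := [set x : {set 'I_n} | (#|x| == m.+1) && (pair01 \subset x)
    || (#|x| == m.+2) && (pair01 \subset x)])); last by move=> x; rewrite !inE andb_orl.
rewrite card_set_orb; last by move=> x /andP[/eqP-> _]; rewrite ltn_eqF.
rewrite card_sets_over01; case: m => [|m]; last first.
  by rewrite card_sets_over01; case: n n_ge2 => [|[|n']] //= _; rewrite [in RHS]binS addnC.
rewrite (_ : [set x | _] = set0) ?cards0 ?bin0 //.
apply/setP=> x; rewrite !inE; apply/negbTE; apply/negP => /andP[/eqP cardx].
by move/subset_leq_card; rewrite cardx card_pair01.
Qed.

End Counting.

Lemma nbhd_Bset n r t : nbhd t (Bset n r) \subset Bset n (r + t).
Proof.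
apply/subsetP=> x; rewrite inE => /existsP[y /andP[yB dxy]]; rewrite hdistE in dxy.
move: yB; rewrite /Bset !inE.
have cardx := cardsID y x; have cardy := cardsID x y; rewrite setIC in cardy.
case/orP => [leyr | /andP[cardy2 py]]; first by apply/orP; left; lia.
have [//|ltrx] := leqP #|x| (r + t).
have /eqP : #|y :\: x| = 0 by case/orP: cardy2 => /eqP cardy2; lia.
rewrite cards_eq0 setD_eq0 => yx; rewrite (subset_trans py yx) andbT /=.
have [//|/eqP neq1] /= := eqVneq #|x| (r + t).+1.
apply/eqP; case/orP: cardy2 => /eqP cardy2; move: neq1 ltrx cardx; set X := #|x|; lia.
Qed.

Lemma nbhd_setC_Bset n r t : t <= r -> nbhd t (~: Bset n r) \subset ~: Bset n (r - t).
Proof.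
move=> ler; apply/subsetP=> x; rewrite inE => /existsP[y /andP[yNB dxy]].
rewrite inE; apply/negP => xB; move/negP: yNB; rewrite inE; apply.
by rewrite -(subnK ler) (subsetP (nbhd_Bset n (r - t) t)) // (mem_nbhd xB) // hdistC.
Qed.

Lemma card_sets n : #|{set 'I_n}| = 2 ^ n.
Proof. by rewrite -cardsT -powersetT card_powerset cardsT card_ord. Qed.

Lemma card_Bset_gsum n r : 2 <= n -> #|Bset n r| = gsum n r.
Proof. by move=> n_ge2; rewrite card_Bset // gval_gsum // ltnW. Qed.

Lemma card_setC_Bset n r : 2 <= n -> r <= n - 2 -> #|~: Bset n r| = gsum n (n - 2 - r).
Proof.
move=> n_ge2 lern; have := cardsC (Bset n r).
by rewrite card_sets card_Bset_gsum // -(gsum_compl (a := r) (b := n - 2 - r)) //; lia.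
Qed.

Lemma setC_Bset_full n : 2 <= n -> ~: Bset n n.-1 = set0.
Proof.
move=> n_ge2; apply/eqP; rewrite -cards_eq0; have := cardsC (Bset n n.-1).
by rewrite card_sets card_Bset_gsum // gsum_full //; lia.
Qed.

Theorem mainTheorem2 (n r : nat) (hn : 2 <= n) (hr : r <= n.-1) :
  #|Bset n r| = gval n r /\ extremal (Bset n r).
Proof.
have n_gt0 : 0 < n by lia.
split; first exact: card_Bset.
move=> t _; split=> C cardC.
  rewrite (leq_trans (subset_leq_card (nbhd_Bset n r t))) // card_Bset_gsum //.
  by apply: (gsum_leq_card_nbhd n_gt0); rewrite cardC card_Bset_gsum.
have [-> | ltr] := eqVneq r n.-1; first by rewrite setC_Bset_full // nbhd_set0 cards0.
have lern : r <= n - 2 by lia.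
have lbC : gsum n (n - 2 - r + t) <= #|nbhd t C|.
  by apply: (gsum_leq_card_nbhd n_gt0); rewrite cardC card_setC_Bset.
have [letr | ltrt] := leqP t r.
  apply: leq_trans (subset_leq_card (nbhd_setC_Bset n letr)) _.
  have lertn : r - t <= n - 2 by lia.
  by rewrite card_setC_Bset // (_ : n - 2 - (r - t) = n - 2 - r + t) //; lia.
have full : gsum n (n - 2 - r + t) = 2 ^ n by apply: gsum_full; lia.
by rewrite (leq_trans (max_card _)) // card_sets -full.
Qed.
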